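(* Let $\alpha>0$. Then there exists a unique $\tilde\theta_\alpha\in(0,\theta^+_\alpha)\cap(0,\frac\pi4)$ such that $L(\alpha,\tilde\theta_\alpha)=0$.
   Context: For $\alpha>0$ and $\theta\in\mathbb{R}$ set $C_{\alpha,\theta}=\frac{\sin(2\theta)}{2\alpha}$ and $P_{\alpha,\theta}(x)=\alpha^2+\cos(2\theta)x^2-C_{\alpha,\theta}^2x^4$. Let $\theta^+_\alpha=\pi/2$ if $\alpha>1$, and $\theta^+_\alpha=\frac12\arccos(1-2\alpha^2)$ if $\alpha\le1$. Let $\Omega=\{(\alpha,\theta):\alpha>0,|\theta|<\theta^+_\alpha\}$; on $\Omega$ one has $P_{\alpha,\theta}>0$ on $[-1,1]$. For $(\alpha,\theta)\in\Omega$ define $$L(\alpha,\theta)=\int_{-1}^1\frac{2\alpha C_{\alpha,\theta}^2x^2-\alpha\cos(2\theta)+C_{\alpha,\theta}^2x^2\sqrt{P_{\alpha,\theta}(x)}}{\sqrt{(1-x^2)P_{\alpha,\theta}(x)}\,\big(\alpha+\sqrt{P_{\alpha,\theta}(x)}\big)}\,dx.$$ *)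

From Stdlib Require Import Reals.
From Coquelicot Require Import Coquelicot.
Open Scope R_scope.

Definition Cc (alpha theta : R) : R := sin (2 * theta) / (2 * alpha).

Definition Pp (alpha theta x : R) : R :=
  alpha ^ 2 + cos (2 * theta) * x ^ 2 - (Cc alpha theta) ^ 2 * x ^ 4.

Definition theta_plus (alpha : R) : R :=
  if Rlt_dec 1 alpha then PI / 2 else / 2 * acos (1 - 2 * alpha ^ 2).

Definition L_integrand (alpha theta x : R) : R :=
  (2 * alpha * (Cc alpha theta) ^ 2 * x ^ 2 - alpha * cos (2 * theta)
     + (Cc alpha theta) ^ 2 * x ^ 2 * sqrt (Pp alpha theta x))
  / (sqrt ((1 - x ^ 2) * Pp alpha theta x) * (alpha + sqrt (Pp alpha theta x))).

Definition L (alpha theta : R) : R :=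
  RInt_gen (L_integrand alpha theta) (at_right (-1)) (at_left 1).

From Stdlib Require Import Reals Lra Psatz.
From Coquelicot Require Import Coquelicot.
Open Scope R_scope.

(** The substitution [x = sin t] turns [L(α,θ)] into the proper integral over
    [(-π/2, π/2)] of a continuous integrand, as long as [cos 2θ > 1 - 2α²].
    On that range, and for [0 ≤ θ ≤ π/4], the integrand is pointwise strictly
    increasing in [θ] (since [C²] increases and [cos 2θ] decreases), so [L(α,·)]
    has at most one zero; it is negative at [θ = 0].  If [2α² > 1] it is positive
    at [θ = π/4 < θ⁺].  If [2α² ≤ 1], then at [θ = θ⁺] the polynomial [P] becomes
    [(1 - x²)(α² + (1 - α²)x²)] and the integrand dominates [α²/cos t - 1/α],
    whose integral diverges; so an integral truncated close to [±π/2] is positive,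
    and by continuity [L(α,θ) > 0] for [θ] slightly below [θ⁺], the tails being
    nonnegative there.  The intermediate value theorem gives the zero. *)

Lemma continuity_2d_pt_pow f x y n :
  continuity_2d_pt f x y -> continuity_2d_pt (fun u v => f u v ^ n) x y.
Proof.
  intros Hf; induction n as [|n IH]; simpl.
  - apply continuity_2d_pt_const.
  - now apply continuity_2d_pt_mult.
Qed.

Lemma continuity_2d_pt_lift1 p x y :
  continuity_pt p x -> continuity_2d_pt (fun u _ => p u) x y.
Proof.
  intros Hp. apply (continuity_1d_2d_pt_comp p (fun u _ => u)); [exact Hp|].
  apply continuity_2d_pt_id1.
Qed.

Lemma continuity_2d_pt_partial1 f x y :
  continuity_2d_pt f x y -> continuity_pt (fun u => f u y) x.
Proof.
  intros Hf eps Heps. destruct (Hf (mkposreal eps Heps)) as [d Hd].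
  exists d; split; [apply cond_pos|]. intros z [_ Hz]. apply Hd; [exact Hz|].
  rewrite Rminus_eq_0, Rabs_R0; apply cond_pos.
Qed.

Lemma continuity_2d_pt_partial2 f x y :
  continuity_2d_pt f x y -> continuity_pt (f x) y.
Proof.
  intros Hf eps Heps. destruct (Hf (mkposreal eps Heps)) as [d Hd].
  exists d; split; [apply cond_pos|]. intros z [_ Hz]. apply Hd; [|exact Hz].
  rewrite Rminus_eq_0, Rabs_R0; apply cond_pos.
Qed.

Ltac continuity_2d :=
  repeat first
    [ assumption | apply continuity_2d_pt_plus | apply continuity_2d_pt_minus
    | apply continuity_2d_pt_opp | apply continuity_2d_pt_mult
    | apply continuity_2d_pt_pow | apply continuity_2d_pt_const
    | apply continuity_2d_pt_id1 | apply continuity_2d_pt_id2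
    | apply (continuity_1d_2d_pt_comp sin); [apply continuity_sin|]
    | apply (continuity_1d_2d_pt_comp cos); [apply continuity_cos|]
    | apply continuity_2d_pt_lift1; assumption ].

Lemma continuity_pt_locally_pos f c :
  continuity_pt f c -> 0 < f c -> exists r, 0 < r /\ forall x, Rabs (x - c) < r -> 0 < f x.
Proof.
  intros Hf Hc. destruct (Hf (f c) Hc) as [r [Hr Hball]].
  exists r; split; [exact Hr|]. intros x Hx.
  destruct (Req_dec x c) as [->|Hne]; [exact Hc|].
  assert (Hd : Rabs (f x - f c) < f c) by (apply Hball; split; [split; [exact I | auto] | exact Hx]).
  apply Rabs_def2 in Hd. lra.
Qed.

Lemma ball_R_Rabs (x : R) (e : posreal) y : ball x e y -> Rabs (y - x) < e.
Proof. intros H; exact H. Qed.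

Lemma Rabs_ball_R (x : R) (e : posreal) y : Rabs (y - x) < e -> ball x e y.
Proof. intros H; exact H. Qed.

Lemma at_right_interval a b : a < b -> at_right a (fun x => a < x < b).
Proof.
  intros Hab. exists (mkposreal (b - a) ltac:(lra)). intros y Hy Hay.
  apply ball_R_Rabs, Rabs_def2 in Hy. simpl in Hy. lra.
Qed.

Lemma at_left_interval a b : a < b -> at_left b (fun x => a < x < b).
Proof.
  intros Hab. exists (mkposreal (b - a) ltac:(lra)). intros y Hy Hyb.
  apply ball_R_Rabs, Rabs_def2 in Hy. simpl in Hy. lra.
Qed.

Lemma filter_prod_unit_interval (P : R * R -> Prop) :
  (forall u v, -1 < u < 0 -> 0 < v < 1 -> P (u, v)) ->
  filter_prod (at_right (-1)) (at_left 1) P.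
Proof.
  intros HP. exists (fun x => -1 < x < 0) (fun x => 0 < x < 1).
  - apply at_right_interval; lra.
  - apply at_left_interval; lra.
  - exact HP.
Qed.

Lemma locally_interval a b x : a < x < b -> locally x (fun y => a < y < b).
Proof.
  intros Hx. assert (Hd : 0 < Rmin (x - a) (b - x)) by (apply Rmin_glb_lt; lra).
  exists (mkposreal _ Hd). intros y Hy. apply ball_R_Rabs, Rabs_def2 in Hy. simpl in Hy.
  pose proof (Rmin_l (x - a) (b - x)). pose proof (Rmin_r (x - a) (b - x)). lra.
Qed.

Lemma continuity_pt_RInt_param (K : R -> R -> R) a b c r :
  a <= b -> 0 < r ->
  (forall t, a <= t <= b -> continuity_2d_pt K c t) ->
  (forall th, Rabs (th - c) < r -> ex_RInt (K th) a b) ->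
  continuity_pt (fun th => RInt (K th) a b) c.
Proof.
  intros Hab Hr Hc Hex eps Heps.
  assert (Heps' : 0 < eps / (b - a + 1)) by (apply Rdiv_lt_0_compat; lra).
  destruct (uniform_continuity_2d_1d' K a b c Hc (mkposreal _ Heps')) as [d Hd].
  assert (Hdr : 0 < Rmin d r) by (apply Rmin_glb_lt; [apply cond_pos | exact Hr]).
  exists (Rmin d r). split; [exact Hdr|]. intros th [_ Hth]. simpl in Hth. unfold R_dist in *.
  pose proof (Rmin_l d r). pose proof (Rmin_r d r).
  assert (Hint_th : ex_RInt (K th) a b) by (apply Hex; lra).
  assert (Hint_c : ex_RInt (K c) a b) by (apply Hex; rewrite Rminus_eq_0, Rabs_R0; exact Hr).
  simpl. unfold Rdist.
  change (RInt (K th) a b - RInt (K c) a b) with (minus (RInt (K th) a b) (RInt (K c) a b)).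
  rewrite <- (RInt_minus (V := R_CompleteNormedModule)) by assumption.
  eapply Rle_lt_trans.
  - apply abs_RInt_le_const with (M := eps / (b - a + 1)); [exact Hab| |].
    + now apply (ex_RInt_minus (V := R_CompleteNormedModule)).
    + intros t Ht. left. apply Rabs_def2 in Hth.
      apply (Hd t c t th); try lra. rewrite Rminus_eq_0, Rabs_R0. apply cond_pos.
  - apply Rlt_le_trans with ((b - a + 1) * (eps / (b - a + 1))).
    + apply Rmult_lt_compat_r; lra.
    + right. field. lra.
Qed.

Lemma continuity_pt_Rmin_r c x : continuity_pt (fun y => Rmin y c) x.
Proof.
  intros eps Heps. exists eps. split; [exact Heps|]. intros y [_ Hy]. simpl in *.
  unfold R_dist in *. apply Rabs_def2 in Hy.
  unfold Rmin; destruct (Rle_dec y c), (Rle_dec x c); apply Rabs_def1; lra.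
Qed.

Lemma asin_increasing x y : -1 <= x <= 1 -> -1 <= y <= 1 -> x < y -> asin x < asin y.
Proof.
  intros Hx Hy Hxy. pose proof (asin_bound x). pose proof (asin_bound y).
  destruct (Rlt_le_dec (asin x) (asin y)) as [|Hle]; [assumption|].
  destruct (Rle_lt_or_eq_dec _ _ Hle) as [Hlt|Heq].
  - assert (sin (asin y) < sin (asin x)) by (apply sin_increasing_1; lra).
    rewrite !sin_asin in * by lra. lra.
  - apply (f_equal sin) in Heq. rewrite !sin_asin in Heq by lra. lra.
Qed.

Lemma asin_near_m1 e :
  0 < e -> exists d, 0 < d /\ forall y, -1 < y < -1 + d -> asin y < - (PI / 2) + e.
Proof.
  intros He. pose proof PI2_1. set (e' := Rmin e 1).
  assert (He' : 0 < e' <= e) by (split; [apply Rmin_glb_lt; lra | apply Rmin_l]).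
  assert (e' <= 1) by apply Rmin_r.
  assert (Hcos : 0 < cos e' < 1).
  { split; [apply cos_gt_0; lra|]. rewrite <- cos_0. apply cos_decreasing_1; lra. }
  exists (1 - cos e'). split; [lra|]. intros y Hy.
  assert (Hval : asin (- cos e') = - (PI / 2) + e').
  { rewrite <- sin_shift, <- sin_neg, asin_sin by lra. ring. }
  assert (asin y < asin (- cos e')) by (apply asin_increasing; lra). lra.
Qed.

Lemma filterlim_asin_m1 : filterlim asin (at_right (-1)) (locally (- (PI / 2))).
Proof.
  apply filterlim_locally. intros eps.
  destruct (asin_near_m1 eps (cond_pos eps)) as [d [Hd Hnear]].
  exists (mkposreal d Hd). intros y Hy Hy1. apply ball_R_Rabs, Rabs_def2 in Hy. simpl in Hy.
  pose proof (asin_bound y). specialize (Hnear y ltac:(lra)).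
  apply Rabs_ball_R, Rabs_def1; lra.
Qed.

Lemma filterlim_asin_1 : filterlim asin (at_left 1) (locally (PI / 2)).
Proof.
  apply filterlim_locally. intros eps.
  destruct (asin_near_m1 eps (cond_pos eps)) as [d [Hd Hnear]].
  exists (mkposreal d Hd). intros y Hy Hy1. apply ball_R_Rabs, Rabs_def2 in Hy. simpl in Hy.
  pose proof (asin_bound y). specialize (Hnear (- y) ltac:(lra)). rewrite asin_opp in Hnear.
  apply Rabs_ball_R, Rabs_def1; lra.
Qed.

Lemma is_derive_asin x : -1 < x < 1 -> is_derive asin x (/ sqrt (1 - x ^ 2)).
Proof.
  intros Hx. apply is_derive_Reals, derive_pt_eq_1 with (derivable_pt_asin x Hx).
  rewrite derive_pt_asin. unfold Rsqr. now rewrite Rdiv_1_l, <- Rsqr_pow2.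
Qed.

Lemma is_RInt_inv_cos T :
  0 <= T < PI / 2 -> is_RInt (fun t => / cos t) (- T) T (ln (1 + sin T) - ln (1 - sin T)).
Proof.
  intros HT. pose proof PI2_1.
  assert (Hcos : forall t, - T <= t <= T -> 0 < cos t) by (intros t Ht; apply cos_gt_0; lra).
  assert (Hsin : forall t, - T <= t <= T -> -1 < sin t).
  { intros t Ht. assert (Hlt : sin (- (PI / 2)) < sin t) by (apply sin_increasing_1; lra).
    rewrite sin_neg, sin_PI2 in Hlt. lra. }
  replace (ln (1 + sin T) - ln (1 - sin T))
    with (minus (ln (1 + sin T) - ln (cos T)) (ln (1 + sin (- T)) - ln (cos (- T))))
    by (rewrite sin_neg, cos_neg, <- Rminus_def; unfold minus, plus, opp; simpl; ring).
  apply (is_RInt_derive (V := R_CompleteNormedModule) (fun t => ln (1 + sin t) - ln (cos t))).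
  - intros t Ht. rewrite Rmin_left, Rmax_right in Ht by lra.
    specialize (Hcos t Ht). specialize (Hsin t Ht). pose proof (sin2_cos2 t) as Hsc.
    unfold Rsqr in Hsc. auto_derive; [repeat split; lra|].
    apply (Rmult_eq_reg_r (cos t * (1 + sin t))); [|nra].
    field_simplify; [nra | lra..].
  - intros t Ht. rewrite Rmin_left, Rmax_right in Ht by lra.
    apply continuous_Rinv_comp; [|apply Rgt_not_eq, Hcos, Ht].
    apply continuity_pt_filterlim, continuity_cos.
Qed.

(** * The kernel of the integrand *)

Definition L_radicand (a A c u : R) : R := a ^ 2 + c * u - A * u ^ 2.

(* With [A = C²], [c = cos 2θ] and [u = x²], [P = L_radicand] and the integrand of [L] is
   [L_kernel / sqrt (1 - x²)]. *)
Definition L_kernel (a A c u : R) : R :=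
  (2 * a * A * u - a * c + A * u * sqrt (L_radicand a A c u))
  / (sqrt (L_radicand a A c u) * (a + sqrt (L_radicand a A c u))).

Lemma continuity_2d_pt_L_kernel a (A c u : R -> R -> R) x y :
  0 < a -> continuity_2d_pt A x y -> continuity_2d_pt c x y -> continuity_2d_pt u x y ->
  0 < L_radicand a (A x y) (c x y) (u x y) ->
  continuity_2d_pt (fun s t => L_kernel a (A s t) (c s t) (u s t)) x y.
Proof.
  intros Ha HA Hc Hu Hrad.
  assert (Hsqrt : continuity_2d_pt (fun s t => sqrt (L_radicand a (A s t) (c s t) (u s t))) x y).
  { apply (continuity_1d_2d_pt_comp sqrt (fun s t => L_radicand a (A s t) (c s t) (u s t))).
    - now apply sqrt_continuity_pt.
    - unfold L_radicand. continuity_2d. }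
  assert (0 < sqrt (L_radicand a (A x y) (c x y) (u x y))) by now apply sqrt_lt_R0.
  unfold L_kernel, Rdiv. apply continuity_2d_pt_mult.
  - continuity_2d.
  - apply continuity_2d_pt_inv.
    + continuity_2d.
    + apply Rgt_not_eq, Rmult_lt_0_compat; lra.
Qed.

Section Kernel.
Variables a A c u : R.
Hypothesis Ha : 0 < a.
Hypothesis Hrad : 0 < L_radicand a A c u.

Let s := sqrt (L_radicand a A c u).

Lemma sqrt_L_radicand_pos : 0 < s.
Proof. now apply sqrt_lt_R0. Qed.

(* The form in which monotonicity in [A] and [c] is visible. *)
Lemma L_kernel_split : 0 < u -> L_kernel a A c u = (A * u ^ 2 + a ^ 2) / (u * s) - a / u.
Proof.
  intros Hu. pose proof sqrt_L_radicand_pos as Hs.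
  assert (Hss : s * s = L_radicand a A c u) by (apply sqrt_sqrt; lra).
  unfold L_kernel, L_radicand in *; fold s.
  apply (Rmult_eq_reg_r (u * s * (a + s))); [|apply Rgt_not_eq, Rmult_lt_0_compat; nra].
  field_simplify; [|lra..]. replace (s ^ 2) with (s * s) by ring. rewrite Hss. ring.
Qed.

Lemma L_kernel_ge : 0 <= A -> 0 <= c -> 0 <= u -> (A * u - c) / s <= L_kernel a A c u.
Proof.
  intros HA Hc Hu. pose proof sqrt_L_radicand_pos as Hs.
  unfold L_kernel; fold s.
  replace ((A * u - c) / s) with ((A * u - c) * (a + s) / (s * (a + s))) by (field; lra).
  apply Rmult_le_compat_r; [left; apply Rinv_0_lt_compat; nra|].
  assert (0 <= a * A * u) by (apply Rmult_le_pos; [apply Rmult_le_pos|]; lra).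
  nra.
Qed.

Lemma L_kernel_nonneg : 0 <= A -> 0 <= u -> c <= A * u -> 0 <= L_kernel a A c u.
Proof.
  intros HA Hu Hc. pose proof sqrt_L_radicand_pos as Hs.
  assert (0 <= A * u) by now apply Rmult_le_pos.
  unfold L_kernel; fold s. apply Rmult_le_pos; [nra|].
  left; apply Rinv_0_lt_compat; nra.
Qed.

End Kernel.

Lemma L_kernel_lt a A1 A2 c1 c2 u :
  0 < a -> 0 <= A1 <= A2 -> c2 < c1 -> 0 <= u ->
  0 < L_radicand a A1 c1 u -> 0 < L_radicand a A2 c2 u ->
  L_kernel a A1 c1 u < L_kernel a A2 c2 u.
Proof.
  intros Ha HA Hc Hu Hrad1 Hrad2.
  pose proof (sqrt_L_radicand_pos a A1 c1 u Hrad1) as Hs1.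
  pose proof (sqrt_L_radicand_pos a A2 c2 u Hrad2) as Hs2.
  destruct (Rle_lt_or_eq_dec 0 u Hu) as [Hu0|<-].
  - rewrite !L_kernel_split by assumption. apply Rplus_lt_compat_r.
    assert (Hlt : sqrt (L_radicand a A2 c2 u) < sqrt (L_radicand a A1 c1 u)).
    { apply sqrt_lt_1; try lra. unfold L_radicand.
      assert (A1 * u ^ 2 <= A2 * u ^ 2) by (apply Rmult_le_compat_r; nra). nra. }
    assert (A1 * u ^ 2 <= A2 * u ^ 2) by (apply Rmult_le_compat_r; nra).
    unfold Rdiv. apply Rle_lt_trans with ((A2 * u ^ 2 + a ^ 2) * / (u * sqrt (L_radicand a A1 c1 u))).
    + apply Rmult_le_compat_r; [left; apply Rinv_0_lt_compat; nra | lra].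
    + apply Rmult_lt_compat_l; [nra|]. apply Rinv_lt_contravar.
      * apply Rmult_lt_0_compat; apply Rmult_lt_0_compat; lra.
      * now apply Rmult_lt_compat_l.
  - unfold L_kernel, L_radicand. replace (a ^ 2 + c1 * 0 - A1 * 0 ^ 2) with (a * a) by ring.
    replace (a ^ 2 + c2 * 0 - A2 * 0 ^ 2) with (a * a) by ring. rewrite sqrt_square by lra.
    apply Rmult_lt_compat_r; [apply Rinv_0_lt_compat; nra | nra].
Qed.

Lemma L_kernel_neg a c u : 0 < a -> 0 < c -> 0 < L_radicand a 0 c u -> L_kernel a 0 c u < 0.
Proof.
  intros Ha Hc Hrad. pose proof (sqrt_L_radicand_pos a 0 c u Hrad).
  unfold L_kernel. apply Rdiv_neg_pos; nra.
Qed.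

Lemma L_kernel_pos a A u :
  0 < a -> 0 < A -> 0 < u -> 0 < L_radicand a A 0 u -> 0 < L_kernel a A 0 u.
Proof.
  intros Ha HA Hu Hrad. pose proof (sqrt_L_radicand_pos a A 0 u Hrad).
  assert (0 < A * u) by now apply Rmult_lt_0_compat.
  unfold L_kernel. apply Rdiv_lt_0_compat; nra.
Qed.

(* Makes [P > 0] on [[-1, 1]]; for [0 ≤ θ ≤ π/4] it is equivalent to [θ < θ⁺]. *)
Definition admissible (a th : R) : Prop := 1 - 2 * a ^ 2 < cos (2 * th).

Lemma Cc_sq a th : 0 < a -> Cc a th ^ 2 = (1 - cos (2 * th) ^ 2) / (4 * a ^ 2).
Proof.
  intros Ha. unfold Cc. pose proof (sin2_cos2 (2 * th)) as Hsc. unfold Rsqr in Hsc.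
  replace (1 - cos (2 * th) ^ 2) with (sin (2 * th) ^ 2) by nra. field. lra.
Qed.

Lemma Pp_eq_L_radicand a th x : Pp a th x = L_radicand a (Cc a th ^ 2) (cos (2 * th)) (x ^ 2).
Proof. unfold Pp, L_radicand. ring. Qed.

Lemma L_radicand_pos a c u :
  0 < a -> 1 - 2 * a ^ 2 < c -> -1 <= c <= 1 -> 0 <= u <= 1 ->
  0 < L_radicand a ((1 - c ^ 2) / (4 * a ^ 2)) c u.
Proof.
  intros Ha Hc Hc1 Hu. unfold L_radicand.
  replace (a ^ 2 + c * u - (1 - c ^ 2) / (4 * a ^ 2) * u ^ 2)
    with (((1 - u) * (4 * a ^ 4) + u * ((2 * a ^ 2 + c) ^ 2 - 1) + (1 - c ^ 2) * (u - u ^ 2))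
          / (4 * a ^ 2)) by (field; lra).
  apply Rdiv_lt_0_compat; [|nra].
  assert (0 < a ^ 4) by (apply pow_lt; lra).
  assert (0 <= (1 - c ^ 2) * (u - u ^ 2)) by (apply Rmult_le_pos; nra).
  assert (0 <= u * ((2 * a ^ 2 + c) ^ 2 - 1)) by (apply Rmult_le_pos; nra).
  destruct (Rle_lt_or_eq_dec u 1 (proj2 Hu)) as [Hu1|Hu1]; [nra | subst u; nra].
Qed.

Lemma L_radicand_admissible a th u :
  0 < a -> admissible a th -> 0 <= u <= 1 ->
  0 < L_radicand a (Cc a th ^ 2) (cos (2 * th)) u.
Proof.
  intros Ha Hth Hu. rewrite Cc_sq by exact Ha.
  apply L_radicand_pos; [exact Ha | exact Hth | apply COS_bound | exact Hu].
Qed.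

Lemma sin_sq_bound t : 0 <= sin t ^ 2 <= 1.
Proof. pose proof (SIN_bound t). nra. Qed.

(** * The substitution x = sin t *)

Definition L_sin_integrand (a th t : R) : R := L_kernel a (Cc a th ^ 2) (cos (2 * th)) (sin t ^ 2).

Definition L_sin (a th : R) : R := RInt (L_sin_integrand a th) (-(PI/2)) (PI/2).

Lemma continuity_2d_pt_L_sin_integrand a p th0 t0 :
  0 < a -> continuity_pt p th0 ->
  0 < L_radicand a (Cc a (p th0) ^ 2) (cos (2 * p th0)) (sin t0 ^ 2) ->
  continuity_2d_pt (fun th t => L_sin_integrand a (p th) t) th0 t0.
Proof.
  intros Ha Hp Hrad.
  apply (continuity_2d_pt_L_kernel a (fun th _ => Cc a (p th) ^ 2)
           (fun th _ => cos (2 * p th)) (fun _ t => sin t ^ 2)); try assumption;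
    unfold Cc, Rdiv; continuity_2d.
Qed.

Lemma continuous_L_sin_integrand a th t :
  0 < a -> 0 < L_radicand a (Cc a th ^ 2) (cos (2 * th)) (sin t ^ 2) ->
  continuous (L_sin_integrand a th) t.
Proof.
  intros Ha Hrad. apply continuity_pt_filterlim.
  apply (continuity_2d_pt_partial2 (fun th t => L_sin_integrand a ((fun u => u) th) t)).
  apply continuity_2d_pt_L_sin_integrand; [exact Ha | apply continuity_pt_id | exact Hrad].
Qed.

Lemma continuous_L_sin_integrand_admissible a th t :
  0 < a -> admissible a th -> continuous (L_sin_integrand a th) t.
Proof.
  intros Ha Hth. apply continuous_L_sin_integrand; [exact Ha|].
  apply L_radicand_admissible; [exact Ha | exact Hth | apply sin_sq_bound].
Qed.

Lemma ex_RInt_L_sin_integrand a th x y :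
  0 < a -> admissible a th -> ex_RInt (L_sin_integrand a th) x y.
Proof.
  intros Ha Hth. apply (ex_RInt_continuous (V := R_CompleteNormedModule)).
  intros t _. now apply continuous_L_sin_integrand_admissible.
Qed.

Lemma L_integrand_asin a th x :
  0 < a -> admissible a th -> -1 < x < 1 ->
  L_integrand a th x = / sqrt (1 - x ^ 2) * L_sin_integrand a th (asin x).
Proof.
  intros Ha Hth Hx.
  assert (Hrad : 0 < L_radicand a (Cc a th ^ 2) (cos (2 * th)) (x ^ 2))
    by (apply L_radicand_admissible; [exact Ha | exact Hth | nra]).
  pose proof (sqrt_L_radicand_pos _ _ _ _ Hrad).
  assert (0 < sqrt (1 - x ^ 2)) by (apply sqrt_lt_R0; nra).
  unfold L_integrand, L_sin_integrand, L_kernel.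
  rewrite sin_asin, Pp_eq_L_radicand, sqrt_mult by nra.
  field. split; lra.
Qed.

Lemma L_eq_L_sin a th : 0 < a -> admissible a th -> L a th = L_sin a th.
Proof.
  intros Ha Hth.
  set (f := L_sin_integrand a th).
  assert (Hf_cont : forall t, continuous f t) by (intros t; now apply continuous_L_sin_integrand_admissible).
  assert (Hf_int : forall x y, ex_RInt f x y) by (intros x y; now apply ex_RInt_L_sin_integrand).
  set (F := fun y => RInt f 0 y).
  assert (HF : forall y, is_derive F y (f y)).
  { intros y. apply is_derive_RInt with 0; [|apply Hf_cont].
    apply filter_forall. intros b. apply RInt_correct, Hf_int. }
  assert (HF_cont : forall y, continuous F y)
    by (intros y; apply (ex_derive_continuous (K := R_AbsRing) (V := R_NormedModule)); eexists; apply HF).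
  set (Phi := fun x => F (asin x)).
  set (g := fun x => / sqrt (1 - x ^ 2) * f (asin x)).
  assert (HPhi : forall x, -1 < x < 1 -> is_derive Phi x (g x))
    by (intros x Hx; exact (is_derive_comp F asin x _ _ (HF (asin x)) (is_derive_asin x Hx))).
  assert (Hg_cont : forall x, -1 < x < 1 -> continuous g x).
  { intros x Hx. apply (continuous_mult (K := R_AbsRing)).
    - apply continuous_Rinv_comp; [|apply Rgt_not_eq, sqrt_lt_R0; nra].
      apply continuous_sqrt_comp, continuity_pt_filterlim. apply continuity_pt_minus.
      + apply continuity_pt_const. intros ? ?; reflexivity.
      + apply derivable_continuous_pt, derivable_pt_pow.
    - apply continuous_comp; [|apply Hf_cont].
      apply (ex_derive_continuous (K := R_AbsRing) (V := R_NormedModule)).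
      eexists; now apply is_derive_asin. }
  assert (HPhi_int : is_RInt_gen (Derive Phi) (at_right (-1)) (at_left 1)
                       (F (PI / 2) - F (- (PI / 2)))).
  { apply is_RInt_gen_Derive.
    - apply filter_prod_unit_interval. intros u v Hu Hv x Hx. simpl in Hx.
      rewrite Rmin_left, Rmax_right in Hx by lra. eexists; apply HPhi; lra.
    - apply filter_prod_unit_interval. intros u v Hu Hv x Hx. simpl in Hx.
      rewrite Rmin_left, Rmax_right in Hx by lra.
      apply continuous_ext_loc with g; [|apply Hg_cont; lra].
      apply (filter_imp (fun y => -1 < y < 1)); [|apply locally_interval; lra].
      intros y Hy. symmetry. now apply is_derive_unique, HPhi.
    - apply (filterlim_comp _ _ _ asin F _ _ _ filterlim_asin_m1), HF_cont.
    - apply (filterlim_comp _ _ _ asin F _ _ _ filterlim_asin_1), HF_cont. }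
  unfold L. rewrite (is_RInt_gen_unique _ (F (PI / 2) - F (- (PI / 2)))).
  - unfold F, L_sin. fold f.
    rewrite <- (RInt_Chasles f (- (PI / 2)) 0 (PI / 2)), <- (opp_RInt_swap f (- (PI / 2)) 0)
      by apply Hf_int.
    unfold plus, opp; simpl. ring.
  - apply is_RInt_gen_ext with (Derive Phi); [|exact HPhi_int].
    apply filter_prod_unit_interval. intros u v Hu Hv x Hx. simpl in Hx.
    rewrite Rmin_left, Rmax_right in Hx by lra.
    rewrite L_integrand_asin by (assumption || lra). apply is_derive_unique, HPhi; lra.
Qed.

(** * Monotonicity and signs *)

Lemma admissible_locally a th0 :
  admissible a th0 -> exists r, 0 < r /\ forall th, Rabs (th - th0) < r -> admissible a th.
Proof.
  intros Hth0. unfold admissible in *.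
  destruct (continuity_pt_locally_pos (fun th => cos (2 * th) - (1 - 2 * a ^ 2)) th0)
    as [r [Hr Hpos]].
  - apply (continuity_2d_pt_partial1 (fun th _ => cos (2 * th) - (1 - 2 * a ^ 2)) th0 0).
    continuity_2d.
  - lra.
  - exists r. split; [exact Hr|]. intros th Hth. specialize (Hpos th Hth). lra.
Qed.

Lemma continuity_pt_L_sin a th0 : 0 < a -> admissible a th0 -> continuity_pt (L_sin a) th0.
Proof.
  intros Ha Hth0. destruct (admissible_locally a th0 Hth0) as [r [Hr Hnear]].
  pose proof PI_RGT_0.
  apply continuity_pt_RInt_param with r; [lra | exact Hr | |].
  - intros t _. apply (continuity_2d_pt_L_sin_integrand a (fun th => th)); [exact Ha | apply continuity_pt_id|].
    apply L_radicand_admissible; [exact Ha | exact Hth0 | apply sin_sq_bound].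
  - intros th Hth. apply ex_RInt_L_sin_integrand; [exact Ha | now apply Hnear].
Qed.

Lemma L_sin_integrand_lt a th1 th2 t :
  0 < a -> 0 <= th1 < th2 -> th2 <= PI / 4 -> admissible a th1 -> admissible a th2 ->
  L_sin_integrand a th1 t < L_sin_integrand a th2 t.
Proof.
  intros Ha Hth Hth2 Hadm1 Hadm2. pose proof PI_RGT_0.
  apply L_kernel_lt; [exact Ha | | | apply sin_sq_bound | |].
  - split; [apply pow2_ge_0|]. unfold Cc, Rdiv. rewrite !Rpow_mult_distr.
    apply Rmult_le_compat_r; [apply pow2_ge_0|].
    assert (0 <= sin (2 * th1)) by (apply sin_ge_0; lra).
    assert (sin (2 * th1) < sin (2 * th2)) by (apply sin_increasing_1; lra).
    nra.
  - apply cos_decreasing_1; lra.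
  - apply L_radicand_admissible; [exact Ha | exact Hadm1 | apply sin_sq_bound].
  - apply L_radicand_admissible; [exact Ha | exact Hadm2 | apply sin_sq_bound].
Qed.

Lemma L_sin_increasing a th1 th2 :
  0 < a -> 0 <= th1 < th2 -> th2 <= PI / 4 -> admissible a th1 -> admissible a th2 ->
  L_sin a th1 < L_sin a th2.
Proof.
  intros. pose proof PI_RGT_0. apply RInt_lt; [lra | | |].
  - intros t _. now apply continuous_L_sin_integrand_admissible.
  - intros t _. now apply continuous_L_sin_integrand_admissible.
  - intros t _. now apply L_sin_integrand_lt.
Qed.

Lemma L_sin_inj a y z :
  0 < a -> 0 <= y <= PI / 4 -> 0 <= z <= PI / 4 -> admissible a y -> admissible a z ->
  L_sin a y = L_sin a z -> y = z.
Proof.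
  intros Ha Hy Hz Hadm_y Hadm_z Heq.
  destruct (Rtotal_order y z) as [Hlt|[Heq'|Hlt]]; [|exact Heq'|].
  - pose proof (L_sin_increasing a y z Ha ltac:(lra) ltac:(lra) Hadm_y Hadm_z). lra.
  - pose proof (L_sin_increasing a z y Ha ltac:(lra) ltac:(lra) Hadm_z Hadm_y). lra.
Qed.

Lemma admissible_0 a : 0 < a -> admissible a 0.
Proof. intros Ha. unfold admissible. rewrite Rmult_0_r, cos_0. nra. Qed.

Lemma L_sin_0_neg a : 0 < a -> L_sin a 0 < 0.
Proof.
  intros Ha. pose proof PI_RGT_0.
  assert (Hzero : RInt (fun _ => 0) (- (PI / 2)) (PI / 2) = 0).
  { rewrite RInt_const. unfold scal; simpl; unfold mult; simpl. ring. }
  rewrite <- Hzero at 2. apply RInt_lt; [lra | intros; apply continuous_const | |].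
  - intros t _. now apply continuous_L_sin_integrand_admissible, admissible_0.
  - intros t _. pose proof (L_radicand_admissible a 0 (sin t ^ 2) Ha (admissible_0 a Ha) (sin_sq_bound t)).
    unfold L_sin_integrand, Cc in *. rewrite Rmult_0_r, sin_0, cos_0 in *.
    replace ((0 / (2 * a)) ^ 2) with 0 in * by (field; lra).
    apply L_kernel_neg; lra.
Qed.

Lemma admissible_pi4 a : 1 < 2 * a ^ 2 -> admissible a (PI / 4).
Proof.
  intros Ha. unfold admissible. replace (2 * (PI / 4)) with (PI / 2) by field.
  rewrite cos_PI2. lra.
Qed.

Lemma L_sin_pi4_pos a : 0 < a -> 1 < 2 * a ^ 2 -> 0 < L_sin a (PI / 4).
Proof.
  intros Ha Hbig. pose proof PI_RGT_0. pose proof (admissible_pi4 a Hbig) as Hadm.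
  assert (Hpos : forall t, sin t <> 0 -> 0 < L_sin_integrand a (PI / 4) t).
  { intros t Ht. pose proof (L_radicand_admissible a _ (sin t ^ 2) Ha Hadm (sin_sq_bound t)).
    unfold L_sin_integrand, Cc in *. replace (2 * (PI / 4)) with (PI / 2) in * by field.
    rewrite cos_PI2, sin_PI2 in *. apply L_kernel_pos; try assumption.
    - apply pow_lt, Rdiv_lt_0_compat; lra.
    - rewrite <- Rsqr_pow2. now apply Rsqr_pos_lt. }
  unfold L_sin.
  rewrite <- (RInt_Chasles _ (- (PI / 2)) 0 (PI / 2)) by now apply ex_RInt_L_sin_integrand.
  apply Rplus_lt_0_compat; apply RInt_gt_0;
    try (lra || (intros; now apply continuous_L_sin_integrand_admissible)).
  - intros t Ht. apply Hpos, Rlt_not_eq, sin_lt_0_var; lra.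
  - intros t Ht. apply Hpos, Rgt_not_eq, sin_gt_0; lra.
Qed.

Lemma L_sin_ge_RInt_trunc a th T :
  0 < a -> admissible a th -> 0 < T < PI / 2 -> cos (2 * th) <= Cc a th ^ 2 * sin T ^ 2 ->
  RInt (L_sin_integrand a th) (- T) T <= L_sin a th.
Proof.
  intros Ha Hth HT Hmargin. pose proof (Rmult_le_pos _ _ (pow2_ge_0 (Cc a th)) (pow2_ge_0 (sin T))).
  assert (Htail : forall t, sin T ^ 2 <= sin t ^ 2 -> 0 <= L_sin_integrand a th t).
  { intros t Ht. apply L_kernel_nonneg; [exact Ha | | apply pow2_ge_0 | apply sin_sq_bound |].
    - apply L_radicand_admissible; [exact Ha | exact Hth | apply sin_sq_bound].
    - eapply Rle_trans; [exact Hmargin|]. apply Rmult_le_compat_l; [apply pow2_ge_0 | exact Ht]. }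
  assert (Hint : forall x y, ex_RInt (L_sin_integrand a th) x y) by (intros; now apply ex_RInt_L_sin_integrand).
  assert (0 < sin T) by (apply sin_gt_0; lra).
  unfold L_sin.
  rewrite <- (RInt_Chasles _ (- (PI / 2)) T (PI / 2)), <- (RInt_Chasles _ (- (PI / 2)) (- T) T)
    by apply Hint.
  unfold plus; simpl.
  assert (0 <= RInt (L_sin_integrand a th) (- (PI / 2)) (- T)).
  { apply RInt_ge_0; [lra | apply Hint|]. intros t Ht. apply Htail.
    assert (Hlt : sin t < sin (- T)) by (apply sin_increasing_1; lra). rewrite sin_neg in Hlt. nra. }
  assert (0 <= RInt (L_sin_integrand a th) T (PI / 2)).
  { apply RInt_ge_0; [lra | apply Hint|]. intros t Ht. apply Htail.
    assert (sin T < sin t) by (apply sin_increasing_1; lra). nra. }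
  lra.
Qed.

(** * The case 2α² ≤ 1 *)

Section SmallAlpha.
Variable a : R.
Hypothesis Ha : 0 < a.
Hypothesis Hsmall : 2 * a ^ 2 <= 1.

Lemma theta_plus_small : theta_plus a = / 2 * acos (1 - 2 * a ^ 2).
Proof. unfold theta_plus. destruct (Rlt_dec 1 a); [nra | reflexivity]. Qed.

Lemma cos_2theta_plus : cos (2 * theta_plus a) = 1 - 2 * a ^ 2.
Proof.
  rewrite theta_plus_small. replace (2 * (/ 2 * acos (1 - 2 * a ^ 2))) with (acos (1 - 2 * a ^ 2))
    by field.
  apply cos_acos. nra.
Qed.

Lemma theta_plus_small_range : 0 < theta_plus a <= PI / 4.
Proof.
  rewrite theta_plus_small.
  pose proof (acos_bound_lt (1 - 2 * a ^ 2) ltac:(nra)).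
  enough (acos (1 - 2 * a ^ 2) <= PI / 2) by lra.
  apply Rnot_lt_le. intros Hlt.
  assert (Hcos : cos (acos (1 - 2 * a ^ 2)) < cos (PI / 2)) by (apply cos_decreasing_1; lra).
  rewrite cos_acos, cos_PI2 in Hcos by nra. nra.
Qed.

Lemma admissible_lt_theta_plus th : 0 <= th < theta_plus a -> admissible a th.
Proof.
  intros Hth. pose proof theta_plus_small_range. pose proof PI_RGT_0.
  unfold admissible. rewrite <- cos_2theta_plus. apply cos_decreasing_1; lra.
Qed.

Lemma Cc_theta_plus_sq : Cc a (theta_plus a) ^ 2 = 1 - a ^ 2.
Proof. rewrite Cc_sq, cos_2theta_plus by exact Ha. field. lra. Qed.

Lemma L_radicand_theta_plus_pos t :
  - (PI / 2) < t < PI / 2 ->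
  0 < L_radicand a (Cc a (theta_plus a) ^ 2) (cos (2 * theta_plus a)) (sin t ^ 2).
Proof.
  intros Ht. rewrite Cc_theta_plus_sq, cos_2theta_plus. unfold L_radicand.
  assert (0 < cos t) by (apply cos_gt_0; lra).
  pose proof (sin2_cos2 t) as Hsc. unfold Rsqr in Hsc.
  replace (a ^ 2 + (1 - 2 * a ^ 2) * sin t ^ 2 - (1 - a ^ 2) * (sin t ^ 2) ^ 2)
    with (cos t ^ 2 * (a ^ 2 + (1 - a ^ 2) * sin t ^ 2)) by nra.
  assert (0 <= (1 - a ^ 2) * sin t ^ 2) by (apply Rmult_le_pos; nra).
  apply Rmult_lt_0_compat; nra.
Qed.

Lemma L_sin_integrand_theta_plus_ge t :
  - (PI / 2) < t < PI / 2 -> a ^ 2 * / cos t - / a <= L_sin_integrand a (theta_plus a) t.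
Proof.
  intros Ht. pose proof (L_radicand_theta_plus_pos t Ht) as Hrad.
  unfold L_sin_integrand. rewrite Cc_theta_plus_sq, cos_2theta_plus in *.
  eapply Rle_trans; [|apply L_kernel_ge; [exact Ha | exact Hrad | nra | nra | apply sin_sq_bound]].
  set (k := cos t). set (w := sqrt (a ^ 2 + (1 - a ^ 2) * sin t ^ 2)).
  assert (Hk : 0 < k <= 1) by (split; [apply cos_gt_0; lra | apply COS_bound]).
  pose proof (sin2_cos2 t) as Hsc. unfold Rsqr in Hsc. fold k in Hsc.
  assert (Hw : a <= w <= 1).
  { unfold w. split.
    - apply Rle_trans with (sqrt (a ^ 2)); [right; symmetry; apply sqrt_pow2; lra|].
      apply sqrt_le_1_alt. nra.
    - apply Rle_trans with (sqrt 1); [apply sqrt_le_1_alt; nra | rewrite sqrt_1; lra]. }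
  assert (Hsqrt : sqrt (L_radicand a (1 - a ^ 2) (1 - 2 * a ^ 2) (sin t ^ 2)) = k * w).
  { replace (L_radicand a (1 - a ^ 2) (1 - 2 * a ^ 2) (sin t ^ 2))
      with (k ^ 2 * (a ^ 2 + (1 - a ^ 2) * sin t ^ 2)) by (unfold L_radicand; nra).
    rewrite sqrt_mult_alt, sqrt_pow2 by nra. reflexivity. }
  rewrite Hsqrt.
  apply Rmult_le_reg_r with (k * w * a); [apply Rmult_lt_0_compat; [apply Rmult_lt_0_compat|]; lra|].
  replace ((a ^ 2 * / k - / a) * (k * w * a)) with (a ^ 3 * w - k * w) by (field; lra).
  replace (sin t ^ 2) with (1 - k ^ 2) by nra.
  replace (((1 - a ^ 2) * (1 - k ^ 2) - (1 - 2 * a ^ 2)) / (k * w) * (k * w * a))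
    with (a ^ 3 - a * (1 - a ^ 2) * k ^ 2) by (field; lra).
  assert (a ^ 3 * w <= a ^ 3) by (assert (0 < a ^ 3) by (apply pow_lt; lra); nra).
  assert (0 <= (1 - a ^ 2) * k <= 1) by (split; [apply Rmult_le_pos|]; nra).
  assert (a * (1 - a ^ 2) * k <= w) by (rewrite Rmult_assoc; nra).
  nra.
Qed.

(* [ln (1/ε) > 4/α³] beats the [-2T/α] part of the lower bound, and [ε ≤ α²/4] keeps the
   tails [T ≤ |t| ≤ π/2] nonnegative near [θ⁺]. *)
Definition trunc_eps : R := exp (- (4 / a ^ 3)) * (a ^ 2 / 4).

Definition trunc_T : R := asin (1 - trunc_eps).

Lemma trunc_eps_range : 0 < trunc_eps <= a ^ 2 / 4.
Proof.
  unfold trunc_eps. pose proof (exp_pos (- (4 / a ^ 3))).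
  assert (exp (- (4 / a ^ 3)) <= 1).
  { rewrite <- exp_0. left. apply exp_increasing.
    assert (0 < 4 / a ^ 3) by (apply Rdiv_lt_0_compat; [lra | apply pow_lt; lra]). lra. }
  assert (0 < a ^ 2 / 4) by nra.
  split; [now apply Rmult_lt_0_compat|]. rewrite <- (Rmult_1_l (a ^ 2 / 4)) at 2.
  apply Rmult_le_compat_r; lra.
Qed.

Lemma trunc_T_range : 0 < trunc_T < PI / 2 /\ sin trunc_T = 1 - trunc_eps.
Proof.
  pose proof trunc_eps_range. unfold trunc_T. split; [split|].
  - rewrite <- asin_0. apply asin_increasing; nra.
  - rewrite <- asin_1. apply asin_increasing; nra.
  - apply sin_asin. nra.
Qed.

Lemma RInt_trunc_theta_plus_pos : 0 < RInt (L_sin_integrand a (theta_plus a)) (- trunc_T) trunc_T.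
Proof.
  destruct trunc_T_range as [HT HsinT]. pose proof trunc_eps_range. pose proof PI_4.
  set (T := trunc_T) in *. set (e := trunc_eps) in *.
  assert (Hlow : is_RInt (fun t => a ^ 2 * / cos t - / a) (- T) T
                   (a ^ 2 * (ln (1 + sin T) - ln (1 - sin T)) - (T - - T) * / a))
    by exact (is_RInt_minus _ _ _ _ _ _
                (is_RInt_scal _ _ _ (a ^ 2) _ (is_RInt_inv_cos T ltac:(lra)))
                (is_RInt_const (- T) T (/ a))).
  apply Rlt_le_trans with (RInt (fun t => a ^ 2 * / cos t - / a) (- T) T).
  - rewrite (is_RInt_unique _ _ _ _ Hlow), HsinT.
    assert (0 <= ln (1 + (1 - e))) by (rewrite <- ln_1; apply ln_le; lra).
    assert (Hln : ln (1 - (1 - e)) < - (4 / a ^ 3)).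
    { replace (1 - (1 - e)) with e by ring. unfold e, trunc_eps.
      rewrite ln_mult, ln_exp by (apply exp_pos || nra).
      assert (ln (a ^ 2 / 4) < 0) by (rewrite <- ln_1; apply ln_increasing; nra). lra. }
    assert (a ^ 2 * (4 / a ^ 3) = 4 / a) by (field; lra).
    assert (Hineq : a ^ 2 * (4 / a ^ 3) < a ^ 2 * (ln (1 + (1 - e)) - ln (1 - (1 - e))))
      by (apply Rmult_lt_compat_l; [nra | lra]).
    assert ((T - - T) * / a < 4 / a) by (apply Rmult_lt_compat_r; [apply Rinv_0_lt_compat | ]; lra).
    lra.
  - apply RInt_le; [lra | eexists; exact Hlow | |].
    + apply (ex_RInt_continuous (V := R_CompleteNormedModule)). intros t Ht.
      rewrite Rmin_left, Rmax_right in Ht by lra.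
      apply continuous_L_sin_integrand; [exact Ha | apply L_radicand_theta_plus_pos; lra].
    + intros t Ht. apply L_sin_integrand_theta_plus_ge. lra.
Qed.

(* Clamping [θ] at [θ⁺] keeps the integrand continuous on both sides of [θ⁺]. *)
Lemma continuity_pt_RInt_trunc_clamped :
  continuity_pt (fun th => RInt (L_sin_integrand a (Rmin th (theta_plus a))) (- trunc_T) trunc_T)
    (theta_plus a).
Proof.
  destruct trunc_T_range as [HT _]. pose proof theta_plus_small_range.
  assert (Hclamp : Rmin (theta_plus a) (theta_plus a) = theta_plus a) by (apply Rmin_left; lra).
  apply (continuity_pt_RInt_param (fun th => L_sin_integrand a (Rmin th (theta_plus a))))
    with (theta_plus a); [lra | lra | |].
  - intros t Ht. apply continuity_2d_pt_L_sin_integrand;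
      [exact Ha | apply continuity_pt_Rmin_r | rewrite Hclamp; apply L_radicand_theta_plus_pos; lra].
  - intros th Hth. apply Rabs_def2 in Hth.
    apply (ex_RInt_continuous (V := R_CompleteNormedModule)). intros t Ht.
    rewrite Rmin_left, Rmax_right in Ht by lra.
    apply continuous_L_sin_integrand; [exact Ha|].
    destruct (Rlt_le_dec th (theta_plus a)) as [Hlt|Hge].
    + rewrite Rmin_left by lra.
      apply L_radicand_admissible; [exact Ha | apply admissible_lt_theta_plus; lra | apply sin_sq_bound].
    + rewrite Rmin_right by exact Hge. apply L_radicand_theta_plus_pos; lra.
Qed.

Lemma tail_margin_theta_plus :
  0 < Cc a (theta_plus a) ^ 2 * sin trunc_T ^ 2 - cos (2 * theta_plus a).
Proof.
  destruct trunc_T_range as [_ ->]. pose proof trunc_eps_range.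
  rewrite Cc_theta_plus_sq, cos_2theta_plus. nra.
Qed.

Lemma continuity_pt_tail_margin K th0 :
  continuity_pt (fun th => Cc a th ^ 2 * K - cos (2 * th)) th0.
Proof.
  apply (continuity_2d_pt_partial1 (fun th _ => Cc a th ^ 2 * K - cos (2 * th)) th0 0).
  unfold Cc, Rdiv. continuity_2d.
Qed.

Lemma exists_L_sin_pos_small : exists th, 0 < th < theta_plus a /\ 0 < L_sin a th.
Proof.
  pose proof theta_plus_small_range as Hplus. destruct trunc_T_range as [HT _].
  destruct (continuity_pt_locally_pos _ _ continuity_pt_RInt_trunc_clamped) as [r1 [Hr1 Hmid]].
  { rewrite Rmin_left by lra. exact RInt_trunc_theta_plus_pos. }
  destruct (continuity_pt_locally_pos _ _ (continuity_pt_tail_margin (sin trunc_T ^ 2) (theta_plus a))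
              tail_margin_theta_plus) as [r2 [Hr2 Hmargin]].
  set (d := Rmin (Rmin r1 r2) (theta_plus a)).
  assert (Hd : 0 < d) by (apply Rmin_glb_lt; [apply Rmin_glb_lt|]; lra).
  assert (d <= theta_plus a) by apply Rmin_r.
  assert (d <= r1) by (eapply Rle_trans; [apply Rmin_l | apply Rmin_l]).
  assert (d <= r2) by (eapply Rle_trans; [apply Rmin_l | apply Rmin_r]).
  set (th := theta_plus a - d / 2).
  assert (Hdist : Rabs (th - theta_plus a) < Rmin r1 r2).
  { unfold th. replace (theta_plus a - d / 2 - theta_plus a) with (- (d / 2)) by ring.
    rewrite Rabs_Ropp, Rabs_right by lra. apply Rmin_glb_lt; lra. }
  exists th. split; [unfold th; lra|].
  specialize (Hmid th ltac:(pose proof (Rmin_l r1 r2); lra)).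
  specialize (Hmargin th ltac:(pose proof (Rmin_r r1 r2); lra)).
  rewrite Rmin_left in Hmid by (unfold th; lra).
  eapply Rlt_le_trans; [exact Hmid|].
  apply L_sin_ge_RInt_trunc; [exact Ha | apply admissible_lt_theta_plus; unfold th; lra | exact HT | lra].
Qed.

End SmallAlpha.

Lemma theta_plus_gt_pi4 a : 0 < a -> 1 < 2 * a ^ 2 -> PI / 4 < theta_plus a.
Proof.
  intros Ha Hbig. pose proof PI_RGT_0. unfold theta_plus. destruct (Rlt_dec 1 a); [lra|].
  rewrite acos_asin by nra.
  assert (asin (1 - 2 * a ^ 2) < 0) by (rewrite <- asin_0; apply asin_increasing; nra). lra.
Qed.

Lemma admissible_below_theta_plus a th :
  0 < a -> 0 <= th < theta_plus a -> th <= PI / 4 -> admissible a th.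
Proof.
  intros Ha Hth Hpi4. pose proof PI_RGT_0. unfold admissible. unfold theta_plus in Hth.
  destruct (Rlt_dec 1 a).
  - assert (0 <= cos (2 * th)) by (apply cos_ge_0; lra). nra.
  - pose proof (acos_bound (1 - 2 * a ^ 2)).
    rewrite <- (cos_acos (1 - 2 * a ^ 2)) at 1 by nra.
    apply cos_decreasing_1; lra.
Qed.

Lemma exists_L_sin_pos a :
  0 < a -> exists th, (0 < th < theta_plus a /\ th <= PI / 4) /\ 0 < L_sin a th.
Proof.
  intros Ha. pose proof PI_RGT_0.
  destruct (Rlt_le_dec 1 (2 * a ^ 2)) as [Hbig|Hsmall].
  - exists (PI / 4). pose proof (theta_plus_gt_pi4 a Ha Hbig).
    split; [lra | now apply L_sin_pi4_pos].
  - destruct (exists_L_sin_pos_small a Ha Hsmall) as [th [Hth Hpos]].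
    pose proof (theta_plus_small_range a Ha Hsmall).
    exists th. split; [lra | exact Hpos].
Qed.

Theorem lemma4p5 (alpha : R) (Halpha : 0 < alpha) :
  exists! theta : R,
    (0 < theta < theta_plus alpha /\ theta < PI / 4) /\ L alpha theta = 0.
Proof.
  destruct (exists_L_sin_pos alpha Halpha) as [th1 [[Hth1 Hth1_pi4] Hpos]].
  pose proof (L_sin_0_neg alpha Halpha) as Hneg.
  assert (Hadm : forall th, 0 <= th <= th1 -> admissible alpha th)
    by (intros th Hth; apply admissible_below_theta_plus; lra).
  destruct (Ranalysis5.IVT_interv (L_sin alpha) 0 th1) as [z [Hz Hz0]];
    [intros th Hth; apply continuity_pt_L_sin; [exact Halpha | now apply Hadm]
    | lra | exact Hneg | exact Hpos |].
  assert (z <> 0) by (intros ->; lra).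
  assert (z <> th1) by (intros ->; lra).
  exists z. split.
  - split; [lra|]. rewrite L_eq_L_sin; [exact Hz0 | exact Halpha | apply Hadm; lra].
  - intros y [[Hy Hy_pi4] Hy0].
    assert (Hadm_y : admissible alpha y) by (apply admissible_below_theta_plus; lra).
    rewrite L_eq_L_sin in Hy0 by assumption.
    apply (L_sin_inj alpha); [exact Halpha | lra | lra | apply Hadm; lra | exact Hadm_y | lra].
Qed.
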